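(* Let $\lambda$ be a singular cardinal of countable cofinality, $\kappa>\lambda$ a regular cardinal, and $X=(f_\alpha)_{\alpha<\kappa}$ a $\kappa$-scale for $T_\lambda$. Let $T$ be the down-closure of $X$ in $T_\lambda$ (a $\lambda$-tree with tops $X$). Then for every $T$-graph $G'$, the bipartite graph with bipartition classes $T^{<\omega}$ and $X$ formed by the edges of $G'$ between these sets is a $(\lambda,\kappa)$-graph that has no $(\aleph_0,\kappa)$-subgraph.
   Context: $T_\lambda$ is the order tree of all sequences of elements of $\lambda$ of length at most $\omega$, ordered by initial segment; its elements of length $\omega$ are called tops; $T^{<\omega}$ denotes the finite sequences in $T$. An ideal on $\mathbb{N}$ is a proper subset of $\mathcal{P}(\mathbb{N})$ containing $\emptyset$ and closed under finite unions and subsets. For an ideal $I$ and $f,g:\mathbb{N}\to\lambda$, write $f<_I g$ if $\{n : f(n)\ge g(n)\}\in I$. A $\kappa$-scale for $T_\lambda$ is a family $(f_\alpha)_{\alpha<\kappa}$ of tops for which there exist a strictly increasing sequence $(\lambda_n)_{n\in\mathbb{N}}$ of uncountable regular cardinals with supremum $\lambda$ such that $f_\alpha(n)<\lambda_n$ for all $\alpha,n$, and an ideal $I$ on $\mathbb{N}$ containing all finite sets, such that $f_\alpha<_I f_\beta$ whenever $\alpha<\beta<\kappa$, and for every $g\in\prod_n\lambda_n$ there is $\alpha<\kappa$ with $g<_I f_\alpha$. A $T$-graph is a graph with vertex set $T$ whose edges join comparable points and in which for every $t$ the neighbours of $t$ below $t$ are cofinal in $\{s : s<t\}$. For infinite cardinals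 $\lambda'<\kappa$, a $(\lambda',\kappa)$-graph is a bipartite graph $(A,B)$ with $|A|=\lambda'$, $|B|=\kappa$, each $b\in B$ having infinitely many neighbours in $A$; an $(\aleph_0,\kappa)$-subgraph of $(A,B)$ is a subgraph $(C,D)$ with $C\subseteq A$, $D\subseteq B$ that is an $(\aleph_0,\kappa)$-graph. *)

From Stdlib Require Import List.
Import ListNotations.
Set Implicit Arguments.

Definition full (X : Type) : X -> Prop := fun _ => True.
Arguments full X _ : clear implicits.

Definition finite_set {X : Type} (A : X -> Prop) : Prop :=
  exists l : list X, forall x, A x -> In x l.

Definition card_le {X Y : Type} (A : X -> Prop) (B : Y -> Prop) : Prop :=
  exists f : X -> Y, (forall x, A x -> B (f x)) /\
    (forall x y, A x -> A y -> f x = f y -> x = y).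

Definition card_lt {X Y : Type} (A : X -> Prop) (B : Y -> Prop) : Prop :=
  card_le A B /\ ~ card_le B A.

Definition equipotent {X Y : Type} (A : X -> Prop) (B : Y -> Prop) : Prop :=
  exists f : X -> Y, (forall x, A x -> B (f x)) /\
    (forall x y, A x -> A y -> f x = f y -> x = y) /\
    (forall y, B y -> exists x, A x /\ f x = y).

Definition strict_wellorder {T : Type} (lt : T -> T -> Prop) : Prop :=
  (forall x, ~ lt x x) /\
  (forall x y z, lt x y -> lt y z -> lt x z) /\
  (forall x y, lt x y \/ x = y \/ lt y x) /\
  well_founded lt.

(* the well-ordered type (T,lt) is an initial ordinal, i.e. a cardinal:
   every proper initial segment has strictly smaller cardinality *)
Definition is_cardinal_type {T : Type} (lt : T -> T -> Prop) : Prop :=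
  strict_wellorder lt /\ forall x, card_lt (fun y => lt y x) (full T).

Definition cofinal {T : Type} (lt : T -> T -> Prop) (S : T -> Prop) : Prop :=
  forall x, exists s, S s /\ (x = s \/ lt x s).

Definition regular_type {T : Type} (lt : T -> T -> Prop) : Prop :=
  ~ finite_set (full T) /\
  forall S : T -> Prop, cofinal lt S -> equipotent S (full T).

Definition singular_type {T : Type} (lt : T -> T -> Prop) : Prop :=
  ~ finite_set (full T) /\
  exists S : T -> Prop, cofinal lt S /\ card_lt S (full T).

Definition countable_cofinality {T : Type} (lt : T -> T -> Prop) : Prop :=
  (exists S : T -> Prop, cofinal lt S /\ equipotent S (full nat)) /\
  (forall S : T -> Prop, cofinal lt S -> card_le (full nat) S).

(** Ordinals below lambda are elements of the well-ordered type L;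
    the ordinal c is identified with its initial segment. *)
Definition segment {T : Type} (lt : T -> T -> Prop) (c : T) : T -> Prop :=
  fun x => lt x c.

Definition is_cardinal_elem {T : Type} (lt : T -> T -> Prop) (c : T) : Prop :=
  forall d, lt d c -> card_lt (segment lt d) (segment lt c).

Definition regular_elem {T : Type} (lt : T -> T -> Prop) (c : T) : Prop :=
  ~ finite_set (segment lt c) /\
  forall S : T -> Prop, (forall s, S s -> lt s c) ->
    (forall x, lt x c -> exists s, S s /\ (x = s \/ lt x s)) ->
    equipotent S (segment lt c).

Definition uncountable_elem {T : Type} (lt : T -> T -> Prop) (c : T) : Prop :=
  ~ card_le (segment lt c) (full nat).

Definition ideal_on_nat (I : (nat -> Prop) -> Prop) : Prop :=
  (exists A, ~ I A) /\
  I (fun _ => False) /\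
  (forall A B, I A -> I B -> I (fun n => A n \/ B n)) /\
  (forall A B, I A -> (forall n, B n -> A n) -> I B).

Definition lt_mod {L : Type} (ltL : L -> L -> Prop) (I : (nat -> Prop) -> Prop)
  (f g : nat -> L) : Prop :=
  I (fun n => ~ ltL (f n) (g n)).

(** * kappa-scales for T_lambda; tops are functions nat -> L,
    the family (f_alpha)_{alpha<kappa} is f : K -> nat -> L *)
Definition kappa_scale {L K : Type} (ltL : L -> L -> Prop) (ltK : K -> K -> Prop)
  (f : K -> nat -> L) : Prop :=
  exists (lam : nat -> L) (I : (nat -> Prop) -> Prop),
    (forall n, ltL (lam n) (lam (S n))) /\
    (forall x, exists n, ltL x (lam n)) /\
    (forall n, is_cardinal_elem ltL (lam n) /\ regular_elem ltL (lam n) /\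
               uncountable_elem ltL (lam n)) /\
    (forall a n, ltL (f a n) (lam n)) /\
    ideal_on_nat I /\
    (forall F, finite_set F -> I F) /\
    (forall a b, ltK a b -> lt_mod ltL I (f a) (f b)) /\
    (forall g : nat -> L, (forall n, ltL (g n) (lam n)) ->
       exists a, lt_mod ltL I g (f a)).

(** * The tree T_lambda: nodes are finite sequences or tops *)
Definition node (L : Type) : Type := (list L + (nat -> L))%type.

Fixpoint pre {L : Type} (f : nat -> L) (k : nat) : list L :=
  match k with
  | O => []
  | S k' => pre f k' ++ [f k']
  end.

Definition tlt {L : Type} (u v : node L) : Prop :=
  match u, v with
  | inl s, inl t => exists w, w <> [] /\ t = s ++ w
  | inl s, inr g => s = pre g (length s)
  | inr _, _ => False
  end.

Definition downclosure {L K : Type} (f : K -> nat -> L) (t : node L) : Prop :=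
  (exists a, t = inr (f a)) \/ (exists a, tlt t (inr (f a))).

Definition finite_part {L K : Type} (f : K -> nat -> L) (t : node L) : Prop :=
  downclosure f t /\ exists s, t = inl s.

Definition tops_of {L K : Type} (f : K -> nat -> L) (t : node L) : Prop :=
  exists a, t = inr (f a).

Definition T_graph {L : Type} (T : node L -> Prop) (E : node L -> node L -> Prop) : Prop :=
  (forall u v, E u v -> E v u) /\
  (forall u v, E u v -> T u /\ T v) /\
  (forall u v, E u v -> tlt u v \/ tlt v u) /\
  (forall t, T t -> forall s, tlt s t ->
     exists u, (u = s \/ tlt s u) /\ tlt u t /\ E u t).

(* (P,Q)-graph where the cardinals are given as the sets CP, CQ *)
Definition card_graph {V P Q : Type} (CP : P -> Prop) (CQ : Q -> Prop)
  (A B : V -> Prop) (E : V -> V -> Prop) : Prop :=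
  (forall a b, E a b -> A a /\ B b) /\
  equipotent A CP /\ equipotent B CQ /\
  (forall b, B b -> ~ finite_set (fun a => A a /\ E a b)).

Definition has_aleph0_kappa_subgraph {V K : Type} (CK : K -> Prop)
  (A B : V -> Prop) (E : V -> V -> Prop) : Prop :=
  exists (C D : V -> Prop) (E' : V -> V -> Prop),
    (forall a, C a -> A a) /\ (forall b, D b -> B b) /\
    (forall a b, E' a b -> E a b) /\
    card_graph (full nat) CK C D E'.

(* The finite part T^{<ω} has exactly λ nodes. It has at most λ^{<ω} = λ of them, by
   Hessenberg's theorem |A × A| = |A| for infinite A. It has at least λ of them because the
   levels n at which {f_α(n)} is cofinal in λ_n are unbounded (otherwise the bounds on the
   other levels would give a function dominating the scale), and at such a level the
   regularity of λ_n provides λ_n nodes of length n + 1; these λ_n are cofinal in λ.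
   A top has infinitely many neighbours below it since they are cofinal below it.
   Suppose C ⊆ T^{<ω} is countable and carries an (ℵ₀, κ)-subgraph. For each n, the n-th
   entries of the nodes of C form a countable subset of the uncountable regular λ_n, so they
   lie below some g(n) < λ_n. The scale gives α with g <_I f_α, and since κ is a cardinal,
   some top f_β of the subgraph has β ≥ α. Its infinitely many neighbours in C are initial
   segments of f_β of unbounded length, so f_β(n) < g(n) for every n, contradicting
   g <_I f_β. *)

From Pilot Require Import Defs.
From Stdlib Require Import List Arith Lia Classical ClassicalEpsilon Cantor.
From mathcomp Require ssreflect ssrfun ssrbool eqtype boolp classical_sets functions cardinality.
Import ListNotations.
Set Implicit Arguments.
Unset Strict Implicit.

(* A module, so that MathComp's [card_le] and [finite_set] do not shadow those of [Defs]. *)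
Module ClassicalSetsInterface.
Import ssreflect ssrfun ssrbool eqtype boolp classical_sets functions cardinality.

Lemma zorn_subsets (T : Type) (P : (T -> Prop) -> Prop) :
  (forall F : (T -> Prop) -> Prop, (forall X, F X -> P X) ->
     (forall X Y, F X -> F Y -> (forall t, X t -> Y t) \/ (forall t, Y t -> X t)) ->
     P (fun t => exists2 X, F X & X t)) ->
  exists M, P M /\ forall N, (forall t, M t -> N t) -> P N -> forall t, N t -> M t.
Proof.
move=> chainP; have [M [PM maxM]] := Zorn_bigcup chainP.
exists M; split=> // N MN PN t Nt; apply: contrapT => Mt.
by apply: (maxM N) => //; split=> // /(_ t Nt).
Qed.

Lemma card_le_of_injection {X Y} {A : X -> Prop} {B : Y -> Prop} :
  Defs.card_le A B -> (A #<= B)%card.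
Proof.
move=> [f [fAB finj]].
have [g] : $|{injfun A >-> B}|.
  by apply/injfunPex; exists f => // x y /set_mem Ax /set_mem Ay; apply: finj.
exact: inj_card_le.
Qed.

Lemma equipotent_of_card_eq {X Y} {A : X -> Prop} {B : Y -> Prop} (f0 : X -> Y) :
  (A #= B)%card -> equipotent A B.
Proof.
move=> /card_bijP[g [g' gK g'K]].
exists (fun x => if pselect (A x) is left Ax then val (g (exist _ x (mem_set Ax)))
                 else f0 x); split; [|split].
- by move=> x Ax; case: pselect => // Ax'; exact: set_mem (valP (g _)).
- move=> x y Ax Ay; case: pselect => // Ax'; case: pselect => // Ay'.
  by move=> /val_inj/(congr1 g'); rewrite !gK => -[].
- move=> y By; set z := g' (exist _ y (mem_set By)).
  have Az : A (val z) := set_mem (valP z).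
  exists (val z); split=> //; case: pselect => [Az'|//].
  have -> : exist _ (val z) (mem_set Az') = z by apply: val_inj.
  by rewrite g'K.
Qed.

Lemma card_le_antisym {X Y} (A : X -> Prop) (B : Y -> Prop) :
  Defs.card_le A B -> Defs.card_le B A -> equipotent A B.
Proof.
move=> AB BA; have [f _] := AB; apply: (equipotent_of_card_eq f).
by apply: Cantor_Bernstein; apply: card_le_of_injection.
Qed.

End ClassicalSetsInterface.
Import ClassicalSetsInterface.

(** * Comparing cardinalities *)

Lemma card_le_trans {X Y Z} (A : X -> Prop) (B : Y -> Prop) (C : Z -> Prop) :
  card_le A B -> card_le B C -> card_le A C.
Proof.
  intros [f [fAB finj]] [g [gBC ginj]]. exists (fun x => g (f x)). split; auto.
Qed.

Lemma equipotent_card_ge {X Y} (A : X -> Prop) (B : Y -> Prop) (x0 : X) :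
  equipotent A B -> card_le B A.
Proof.
  intros [f [_ [_ fsurj]]].
  assert (Hinv : forall y, exists x, B y -> A x /\ f x = y).
  { intros y. destruct (classic (B y)) as [By|NBy].
    - destruct (fsurj y By) as [x Hx]. exists x. auto.
    - exists x0. contradiction. }
  destruct (choice _ Hinv) as [g Hg].
  exists g. split.
  - intros y By. apply (Hg y By).
  - intros y y' By By' E.
    rewrite <- (proj2 (Hg y By)), <- (proj2 (Hg y' By')), E. reflexivity.
Qed.

Lemma finite_set_subset {X} (A B : X -> Prop) :
  (forall x, A x -> B x) -> finite_set B -> finite_set A.
Proof. intros AB [l Hl]. exists l. auto. Qed.

Record partial_injection {T} (A B : T -> Prop) (r : T * T -> Prop) : Prop := {
  pinj_dom : forall x y, r (x, y) -> A x /\ B y;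
  pinj_functional : forall x y y', r (x, y) -> r (x, y') -> y = y';
  pinj_injective : forall x x' y, r (x, y) -> r (x', y) -> x = x'
}.

Lemma partial_injection_flip {T} (A B : T -> Prop) r :
  partial_injection A B r -> partial_injection B A (fun p => r (snd p, fst p)).
Proof.
  intros [Hdom Hfun Hinj]. split; simpl.
  - intros y x H. apply and_comm, Hdom, H.
  - intros y x x'. apply Hinj.
  - intros y y' x. apply Hfun.
Qed.

Lemma card_le_of_partial_injection {T} (A B : T -> Prop) r (t0 : T) :
  partial_injection A B r -> (forall x, A x -> exists y, r (x, y)) -> card_le A B.
Proof.
  intros [Hdom Hfun Hinj] Htot.
  assert (Hr : forall x, exists y, A x -> r (x, y)).
  { intros x. destruct (classic (A x)) as [Ax|NAx].
    - destruct (Htot x Ax) as [y Hy]. eauto.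
    - exists t0. contradiction. }
  destruct (choice _ Hr) as [h Hh].
  exists h. split.
  - intros x Ax. apply (Hdom x), Hh, Ax.
  - intros x x' Ax Ax' E. apply (Hinj x x' (h x)); auto. rewrite E. auto.
Qed.

Lemma partial_injection_union {T} (A B : T -> Prop) (F : (T * T -> Prop) -> Prop) :
  (forall r, F r -> partial_injection A B r) ->
  (forall r s, F r -> F s -> (forall p, r p -> s p) \/ (forall p, s p -> r p)) ->
  partial_injection A B (fun p => exists2 r, F r & r p).
Proof.
  intros HF Hchain. split.
  - intros x y [r Fr Hr]. apply (HF r Fr), Hr.
  - intros x y y' [r Fr Hr] [s Fs Hs].
    destruct (Hchain r s Fr Fs) as [rs|sr].
    + apply (pinj_functional (HF s Fs) (rs _ Hr) Hs).
    + apply (pinj_functional (HF r Fr) Hr (sr _ Hs)).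
  - intros x x' y [r Fr Hr] [s Fs Hs].
    destruct (Hchain r s Fr Fs) as [rs|sr].
    + apply (pinj_injective (HF s Fs) (rs _ Hr) Hs).
    + apply (pinj_injective (HF r Fr) Hr (sr _ Hs)).
Qed.

Lemma card_le_total {T} (A B : T -> Prop) (t0 : T) : card_le A B \/ card_le B A.
Proof.
  destruct (@zorn_subsets _ (partial_injection A B) (@partial_injection_union _ A B))
    as [M [HM Mmax]].
  destruct (classic (forall x, A x -> exists y, M (x, y))) as [Mtot|[x Hx]%not_all_ex_not].
  { left. exact (card_le_of_partial_injection t0 HM Mtot). }
  destruct (classic (forall y, B y -> exists x, M (x, y))) as [Monto|[y Hy]%not_all_ex_not].
  { right. apply (card_le_of_partial_injection t0 (partial_injection_flip HM)).
    intros b Bb. destruct (Monto b Bb) as [a Ha]. exists a. auto. }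
  apply imply_to_and in Hx as [Ax NMx]. apply imply_to_and in Hy as [By NMy].
  exfalso. apply NMx. exists y.
  apply (Mmax (fun p => M p \/ p = (x, y))); [auto| |auto].
  destruct HM as [Hdom Hfun Hinj]. split.
  - intros a b [Hab|E]; [auto|]. injection E as -> ->. auto.
  - intros a b b' [H|E] [H'|E'].
    + eauto.
    + injection E' as -> ->. exfalso. eauto.
    + injection E as -> ->. exfalso. eauto.
    + congruence.
  - intros a a' b [H|E] [H'|E'].
    + eauto.
    + injection E' as -> ->. exfalso. eauto.
    + injection E as -> ->. exfalso. eauto.
    + congruence.
Qed.

(** * Hessenberg's theorem *)

Record injective_pairing_on {A} (B : A -> Prop) (g : A -> A -> A) : Prop := {
  pairing_closed : forall x y, B x -> B y -> B (g x y);
  pairing_injective : forall x y x' y', B x -> B y -> B x' -> B y' ->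
    g x y = g x' y' -> x = x' /\ y = y'
}.

Lemma injective_pairing_absorbs {A} (B S : A -> Prop) g (q : A -> A) b0 b1 :
  injective_pairing_on B g -> B b0 -> B b1 -> b0 <> b1 ->
  (forall x, S x -> B (q x)) -> (forall x x', S x -> S x' -> q x = q x' -> x = x') ->
  exists c : A -> A, (forall x, B x \/ S x -> B (c x)) /\
    (forall x x', B x \/ S x -> B x' \/ S x' -> c x = c x' -> x = x').
Proof.
  intros [gB ginj] Bb0 Bb1 b01 qB qinj.
  exists (fun x => if excluded_middle_informative (B x) then g b0 x else g b1 (q x)).
  split.
  - intros x Hx. destruct excluded_middle_informative as [Bx|NBx]; apply gB; auto.
    destruct Hx; [contradiction|auto].
  - intros x x' Hx Hx'.
    destruct excluded_middle_informative as [Bx|NBx];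
      destruct excluded_middle_informative as [Bx'|NBx']; intros E.
    + apply (ginj _ _ _ _ Bb0 Bx Bb0 Bx' E).
    + destruct Hx' as [|Sx']; [contradiction|].
      destruct (b01 (proj1 (ginj _ _ _ _ Bb0 Bx Bb1 (qB x' Sx') E))).
    + destruct Hx as [|Sx]; [contradiction|].
      destruct (b01 (eq_sym (proj1 (ginj _ _ _ _ Bb1 (qB x Sx) Bb0 Bx' E)))).
    + destruct Hx as [|Sx]; [contradiction|]. destruct Hx' as [|Sx']; [contradiction|].
      apply qinj; auto. apply (ginj _ _ _ _ Bb1 (qB x Sx) Bb1 (qB x' Sx') E).
Qed.

Section Hessenberg.
Variables (A : Type) (e : nat -> A).
Hypothesis e_inj : forall i j, e i = e j -> i = j.

Definition pairing_dom (R : A * A * A -> Prop) (x : A) : Prop := exists z, R (x, x, z).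

Record pairing_graph (R : A * A * A -> Prop) : Prop := {
  graph_closed : forall x y z, R (x, y, z) ->
    pairing_dom R x /\ pairing_dom R y /\ pairing_dom R z;
  graph_total : forall x y, pairing_dom R x -> pairing_dom R y -> exists z, R (x, y, z);
  graph_functional : forall u z z', R (u, z) -> R (u, z') -> z = z';
  graph_injective : forall u u' z, R (u, z) -> R (u', z) -> u = u'
}.

Definition cantor_graph (t : A * A * A) : Prop :=
  exists i j, t = (e i, e j, e (to_nat (i, j))).

(* The empty graph is admitted so that the union of the empty chain is admissible. *)
Definition admissible (R : A * A * A -> Prop) : Prop :=
  pairing_graph R /\ ((exists t, R t) -> forall t, cantor_graph t -> R t).

Lemma pairing_graph_cantor : pairing_graph cantor_graph.
Proof.
  assert (Hdom : forall i, pairing_dom cantor_graph (e i)).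
  { intros i. exists (e (to_nat (i, i))), i, i. reflexivity. }
  split.
  - intros x y z [i [j E]]. injection E as -> -> ->. auto.
  - intros x y [z [i [i' E]]] [z' [j [j' E']]].
    injection E as Ex _ _. injection E' as Ey _ _. subst x y.
    exists (e (to_nat (i, j))), i, j. reflexivity.
  - intros u z z' [i [j E]] [i' [j' E']]. injection E as -> ->.
    injection E' as Ei Ej ->. apply e_inj in Ei, Ej. subst. reflexivity.
  - intros u u' z [i [j E]] [i' [j' E']].
    assert (Ez : e (to_nat (i, j)) = e (to_nat (i', j'))) by congruence.
    apply e_inj, to_nat_inj in Ez. injection Ez as -> ->. congruence.
Qed.

Lemma admissible_union (F : (A * A * A -> Prop) -> Prop) :
  (forall R, F R -> admissible R) ->
  (forall R S, F R -> F S -> (forall t, R t -> S t) \/ (forall t, S t -> R t)) ->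
  admissible (fun t => exists2 R, F R & R t).
Proof.
  intros HF Hchain.
  assert (Hdom : forall R x, F R -> pairing_dom R x ->
            pairing_dom (fun t => exists2 R, F R & R t) x).
  { intros R x FR [z Hz]. exists z, R; auto. }
  assert (Hbig : forall R S, F R -> F S -> exists2 U, F U &
            (forall t, R t -> U t) /\ (forall t, S t -> U t)).
  { intros R S FR FS. destruct (Hchain R S FR FS); [exists S|exists R]; auto. }
  split; [split|].
  - intros x y z [R FR Rt]. destruct (graph_closed (proj1 (HF R FR)) Rt) as [? [? ?]].
    repeat split; eapply Hdom; eauto.
  - intros x y [z [R FR Rz]] [z' [S FS Sz']]. destruct (Hbig R S FR FS) as [U FU [RU SU]].
    assert (Ux : pairing_dom U x) by (exists z; auto).
    assert (Uy : pairing_dom U y) by (exists z'; auto).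
    destruct (graph_total (proj1 (HF U FU)) Ux Uy) as [w Uw]. exists w, U; auto.
  - intros u z z' [R FR Rz] [S FS Sz']. destruct (Hbig R S FR FS) as [U FU [RU SU]].
    apply (graph_functional (proj1 (HF U FU)) (RU _ Rz) (SU _ Sz')).
  - intros u u' z [R FR Rz] [S FS Sz']. destruct (Hbig R S FR FS) as [U FU [RU SU]].
    apply (graph_injective (proj1 (HF U FU)) (RU _ Rz) (SU _ Sz')).
  - intros [t [R FR Rt]] c Hc. exists R; [|apply (proj2 (HF R FR))]; eauto.
Qed.

Lemma pairing_graph_fun R : pairing_graph R -> exists g : A -> A -> A,
  (forall x y, pairing_dom R x -> pairing_dom R y -> R (x, y, g x y)) /\
  injective_pairing_on (pairing_dom R) g.
Proof.
  intros HR.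
  assert (Hg : forall p : A * A, exists z,
            pairing_dom R (fst p) -> pairing_dom R (snd p) -> R (fst p, snd p, z)).
  { intros [x y]. destruct (classic (pairing_dom R x /\ pairing_dom R y)) as [[Rx Ry]|NR].
    - destruct (graph_total HR Rx Ry) as [z Hz]. exists z. auto.
    - exists x. intros Rx Ry. tauto. }
  destruct (choice _ Hg) as [g Rg].
  assert (Rg' : forall x y, pairing_dom R x -> pairing_dom R y -> R (x, y, g (x, y))).
  { intros x y. apply (Rg (x, y)). }
  exists (fun x y => g (x, y)). split; [exact Rg'|split].
  - intros x y Rx Ry. apply (graph_closed HR (Rg' x y Rx Ry)).
  - intros x y x' y' Rx Ry Rx' Ry' E.
    pose proof (Rg' x' y' Rx' Ry') as R'. rewrite <- E in R'.
    injection (graph_injective HR (Rg' x y Rx Ry) R'). auto.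
Qed.

Definition fresh_pair M (C : A -> Prop) (x y : A) : Prop :=
  (pairing_dom M x \/ C x) /\ (pairing_dom M y \/ C y) /\
  ~ (pairing_dom M x /\ pairing_dom M y).

Definition adjoin_pairs M C (F : A -> A -> A) (t : A * A * A) : Prop :=
  M t \/ exists x y, fresh_pair M C x y /\ t = (x, y, F x y).

Section Adjoin.
Variables (M : A * A * A -> Prop) (C : A -> Prop) (F : A -> A -> A).
Hypothesis HM : pairing_graph M.
Hypothesis C_fresh : forall x, C x -> ~ pairing_dom M x.
Hypothesis F_into_C : forall x y, fresh_pair M C x y -> C (F x y).
Hypothesis F_inj : forall x y x' y', fresh_pair M C x y -> fresh_pair M C x' y' ->
  F x y = F x' y' -> x = x' /\ y = y'.

Lemma adjoin_pairs_dom x : pairing_dom (adjoin_pairs M C F) x <-> pairing_dom M x \/ C x.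
Proof.
  split.
  - intros [z [Mz|[x1 [y1 [Hf E]]]]]; [left; exists z; auto|].
    injection E as -> _ _. apply Hf.
  - intros [[z Mz]|Cx]; [exists z; left; auto|].
    exists (F x x). right. exists x, x. repeat split; auto.
    intros [Mx _]. apply (C_fresh Cx Mx).
Qed.

Lemma pairing_graph_adjoin : pairing_graph (adjoin_pairs M C F).
Proof.
  assert (Mfresh : forall x y z, M (x, y, z) -> ~ fresh_pair M C x y).
  { intros x y z Mz [_ [_ NM]]. destruct (graph_closed HM Mz) as [Mx [My _]]. auto. }
  assert (MC : forall u z, M (u, z) -> ~ C z).
  { intros [x y] z Mz Cz. destruct (graph_closed HM Mz) as [_ [_ Mz']]. exact (C_fresh Cz Mz'). }
  split.
  - intros x y z [Mz|[x1 [y1 [Hf E]]]]; rewrite !adjoin_pairs_dom.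
    + destruct (graph_closed HM Mz) as [? [? ?]]. auto.
    + injection E as -> -> ->. pose proof (F_into_C Hf). destruct Hf as [? [? _]]. auto.
  - intros x y Nx Ny. rewrite adjoin_pairs_dom in Nx, Ny.
    destruct (classic (pairing_dom M x /\ pairing_dom M y)) as [[Mx My]|NM].
    + destruct (graph_total HM Mx My) as [z Hz]. exists z. left. auto.
    + exists (F x y). right. exists x, y. repeat split; auto.
  - intros u z z' [Mz|[x [y [Hf E]]]] [Mz'|[x' [y' [Hf' E']]]].
    + apply (graph_functional HM Mz Mz').
    + injection E' as -> ->. destruct (Mfresh _ _ _ Mz Hf').
    + injection E as -> ->. destruct (Mfresh _ _ _ Mz' Hf).
    + congruence.
  - intros u u' z [Mz|[x [y [Hf E]]]] [Mz'|[x' [y' [Hf' E']]]].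
    + apply (graph_injective HM Mz Mz').
    + injection E' as -> ->. destruct (MC _ _ Mz (F_into_C Hf')).
    + injection E as -> ->. destruct (MC _ _ Mz' (F_into_C Hf)).
    + injection E as -> ->. injection E' as -> E'. destruct (F_inj Hf Hf' E'). congruence.
Qed.

End Adjoin.

(* The pairs of [B ∪ h(B)] not already in [B × B] are coded through an injection
   [c : B ∪ h(B) -> B] and sent into [h(B)], which is disjoint from [B]. *)
Lemma pairing_graph_extend M (h : A -> A) :
  pairing_graph M ->
  (exists b0 b1, pairing_dom M b0 /\ pairing_dom M b1 /\ b0 <> b1) ->
  (forall x, pairing_dom M x -> ~ pairing_dom M (h x)) ->
  (forall x x', pairing_dom M x -> pairing_dom M x' -> h x = h x' -> x = x') ->
  exists N, pairing_graph N /\ (forall t, M t -> N t) /\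
    exists x, pairing_dom N x /\ ~ pairing_dom M x.
Proof.
  intros HM [b0 [b1 [Bb0 [Bb1 b01]]]] hC hinj.
  set (B := pairing_dom M) in *.
  destruct (pairing_graph_fun HM) as [g [_ gB]].
  set (C := fun x => exists b, B b /\ h b = x).
  assert (BC : forall x, C x -> ~ B x) by (intros x [b [Bb <-]]; auto).
  assert (Hinv : forall x, exists b, C x -> B b /\ h b = x).
  { intros x. destruct (classic (C x)) as [[b Hb]|NC]; [exists b|exists x]; tauto. }
  destruct (choice _ Hinv) as [hinv Hhinv].
  destruct (injective_pairing_absorbs (S := C) (q := hinv) gB Bb0 Bb1 b01) as [c [cB cinj]].
  { intros x Cx. apply (Hhinv x Cx). }
  { intros x x' Cx Cx' E.
    rewrite <- (proj2 (Hhinv x Cx)), <- (proj2 (Hhinv x' Cx')), E. reflexivity. }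
  set (F := fun x y => h (g (c x) (c y))).
  assert (FC : forall x y, fresh_pair M C x y -> C (F x y)).
  { intros x y [Hx [Hy _]]. exists (g (c x) (c y)). split; auto.
    apply (pairing_closed gB); auto. }
  assert (Finj : forall x y x' y', fresh_pair M C x y -> fresh_pair M C x' y' ->
            F x y = F x' y' -> x = x' /\ y = y').
  { intros x y x' y' [Hx [Hy _]] [Hx' [Hy' _]] E.
    apply hinj in E; try (apply (pairing_closed gB); auto).
    destruct (pairing_injective gB (cB x Hx) (cB y Hy) (cB x' Hx') (cB y' Hy') E).
    split; apply cinj; auto. }
  exists (adjoin_pairs M C F). split; [exact (pairing_graph_adjoin HM BC FC Finj)|].
  split; [left; auto|]. exists (h b0). split.
  - apply adjoin_pairs_dom; auto. right. exists b0. auto.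
  - apply hC. auto.
Qed.

Theorem hessenberg : exists p : A * A -> A, forall u v, p u = p v -> u = v.
Proof.
  destruct (@zorn_subsets _ admissible admissible_union) as [M [[HM Mcantor] Mmax]].
  assert (cantorM : forall t, cantor_graph t -> M t).
  { apply Mcantor. apply NNPP. intros Mempty. apply Mempty.
    exists (e 0, e 0, e (to_nat (0, 0))). apply (Mmax cantor_graph).
    - intros t Mt. exfalso. eauto.
    - split; auto using pairing_graph_cantor.
    - exists 0, 0. reflexivity. }
  set (B := pairing_dom M).
  assert (Be : forall i, B (e i)).
  { intros i. exists (e (to_nat (i, i))). apply cantorM. exists i, i. reflexivity. }
  assert (e01 : e 0 <> e 1) by (intros E; apply e_inj in E; discriminate).
  destruct (card_le_total (fun x => ~ B x) B (e 0)) as [[k [kB kinj]]|[h [hC hinj]]].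
  - destruct (pairing_graph_fun HM) as [g [_ gB]].
    destruct (injective_pairing_absorbs gB (Be 0) (Be 1) e01 kB kinj) as [c [cB cinj]].
    exists (fun p => g (c (fst p)) (c (snd p))).
    intros [x y] [x' y'] E. simpl in E.
    destruct (pairing_injective gB (cB x (classic _)) (cB y (classic _))
                (cB x' (classic _)) (cB y' (classic _)) E) as [Ex Ey].
    apply cinj in Ex, Ey; try apply classic. subst. reflexivity.
  - assert (two : exists b0 b1, B b0 /\ B b1 /\ b0 <> b1) by eauto.
    destruct (pairing_graph_extend HM two hC hinj) as [N [HN [MN [x [[z Nz] NBx]]]]].
    exfalso.
    apply NBx. exists z. apply (Mmax N MN); [split|]; auto.
Qed.

End Hessenberg.

Lemma list_injection {A} (e : nat -> A) :
  (forall i j, e i = e j -> i = j) -> exists c : list A -> A, forall s t, c s = c t -> s = t.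
Proof.
  intros e_inj. destruct (hessenberg e_inj) as [p p_inj].
  pose (code := fix code (s : list A) :=
          match s with [] => e 0 | x :: s' => p (x, code s') end).
  exists (fun s => p (e (length s), code s)).
  intros s t E. apply p_inj in E. injection E as El Ec. apply e_inj in El.
  revert t El Ec. induction s as [|x s IH]; intros [|y t] El Ec; try discriminate; auto.
  simpl in Ec. apply p_inj in Ec. injection Ec as -> Ec. f_equal. apply IH; auto.
Qed.

(** * Ideals, regular cardinals and the tree [T_λ] *)

Lemma ideal_not_full (I : (nat -> Prop) -> Prop) (A : nat -> Prop) :
  ideal_on_nat I -> (forall n, A n) -> ~ I A.
Proof. intros [[B NIB] [_ [_ Isub]]] HA IA. apply NIB, (Isub A); auto. Qed.

Lemma lt_mod_trans {L} (ltL : L -> L -> Prop) I (g h k : nat -> L) :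
  ideal_on_nat I -> (forall x y z, ltL x y -> ltL y z -> ltL x z) ->
  lt_mod ltL I g h -> lt_mod ltL I h k -> lt_mod ltL I g k.
Proof.
  intros [_ [_ [Iunion Isub]]] Ltr Igh Ihk. apply (Isub _ _ (Iunion _ _ Igh Ihk)).
  intros n Ngk. apply NNPP. intros [Ngh Nhk]%not_or_and. apply NNPP in Ngh, Nhk. eauto.
Qed.

Lemma not_lt_mod_eventually {L} (ltL : L -> L -> Prop) I (g h : nat -> L) N :
  ideal_on_nat I -> (forall F, finite_set F -> I F) ->
  (forall n, N <= n -> ~ ltL (g n) (h n)) -> ~ lt_mod ltL I g h.
Proof.
  intros HI Ifin Hge Igh. apply (ideal_not_full (A := fun n => n < N \/ ~ ltL (g n) (h n)) HI).
  - intros n. destruct (le_lt_dec N n); auto.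
  - destruct HI as [_ [_ [Iunion _]]]. apply Iunion; auto.
    apply Ifin. exists (seq 0 N). intros n Hn. apply in_seq. lia.
Qed.

Definition cofinal_below {T} (lt : T -> T -> Prop) (c : T) (S : T -> Prop) : Prop :=
  forall x, lt x c -> exists s, S s /\ (x = s \/ lt x s).

Lemma regular_segment_card_le_cofinal {T} (lt : T -> T -> Prop) (c : T) (S : T -> Prop) :
  regular_elem lt c -> (forall s, S s -> lt s c) -> cofinal_below lt c S ->
  card_le (segment lt c) S.
Proof. intros [_ Hreg] Sc Scof. apply (equipotent_card_ge c), Hreg; auto. Qed.

Lemma regular_uncountable_bounded {T} (lt : T -> T -> Prop) (c : T) (S : T -> Prop) :
  (forall x y, lt x y \/ x = y \/ lt y x) ->
  regular_elem lt c -> uncountable_elem lt c ->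
  (forall s, S s -> lt s c) -> card_le S (full nat) ->
  exists y, lt y c /\ forall s, S s -> lt s y.
Proof.
  intros Ltot Hreg Hunc Sc Scount. apply NNPP. intros Hunb. apply Hunc.
  refine (card_le_trans (regular_segment_card_le_cofinal Hreg Sc _) Scount).
  intros x xc. apply NNPP. intros Hno. apply Hunb. exists x. split; auto.
  intros s Ss. destruct (Ltot s x) as [|[<-|xs]]; auto; exfalso; apply Hno; exists s; auto.
Qed.

Lemma large_set_unbounded {K} (ltK : K -> K -> Prop) (S : K -> Prop) :
  (forall a b, ltK a b \/ a = b \/ ltK b a) ->
  (forall a, card_lt (fun b => ltK b a) (full K)) ->
  card_le (full K) S -> forall a, exists b, S b /\ (b = a \/ ltK a b).
Proof.
  intros Ktot Kseg KS a. apply NNPP. intros Hno. apply (proj2 (Kseg a)).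
  apply (card_le_trans KS). exists (fun b => b). split; auto.
  intros b Sb. destruct (Ktot b a) as [|[<-|ab]]; auto; exfalso; apply Hno; exists b; auto.
Qed.

Lemma pre_length {L} (g : nat -> L) k : length (pre g k) = k.
Proof. induction k as [|k IH]; simpl; auto. rewrite length_app, IH. simpl. lia. Qed.

Lemma pre_agree {L} (g h : nat -> L) k n : pre g k = pre h k -> n < k -> g n = h n.
Proof.
  induction k as [|k IH]; intros E Hn; [lia|]. simpl in E. apply app_inj_tail in E as [E Ek].
  destruct (Nat.eq_dec n k) as [->|]; auto. apply IH; auto. lia.
Qed.

Lemma finite_nodes_bounded {L} (P : node L -> Prop) :
  finite_set P -> exists k, forall s, P (inl s) -> length s < k.
Proof.
  intros [l Hl]. set (len := fun t : node L => match t with inl s => length s | inr _ => 0 end).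
  exists (S (list_max (map len l))). intros s Ps. apply Nat.lt_succ_r.
  assert (Hmax := le_n (list_max (map len l))).
  apply list_max_le in Hmax. rewrite Forall_forall in Hmax.
  apply (Hmax (len (inl s))), in_map, Hl, Ps.
Qed.

Lemma T_graph_lower_neighbours_infinite {L K} (f : K -> nat -> L) G :
  T_graph (downclosure f) G ->
  forall a, ~ finite_set (fun t => finite_part f t /\ G t (inr (f a))).
Proof.
  intros [_ [_ [_ Gcof]]] a Hfin. destruct (finite_nodes_bounded Hfin) as [k Hk].
  assert (Hka : tlt (inl (pre (f a) k)) (inr (f a))) by (simpl; rewrite pre_length; auto).
  destruct (Gcof _ (or_introl (ex_intro _ a eq_refl)) _ Hka) as [[s|g] [Hks [Hsa Gsa]]];
    [|contradiction].
  assert (k <= length s).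
  { destruct Hks as [E|[w [_ ->]]].
    - injection E as Es. subst s. rewrite pre_length. lia.
    - rewrite length_app, pre_length. lia. }
  assert (length s < k).
  { apply Hk. repeat split; eauto. right. exists a. exact Hsa. }
  lia.
Qed.

(** * The tree of a scale *)

Section Scale.
Unset Implicit Arguments.
Variables (L K : Type) (ltL : L -> L -> Prop) (ltK : K -> K -> Prop).
Variables (f : K -> nat -> L) (lam : nat -> L) (I : (nat -> Prop) -> Prop).
Hypothesis Lirr : forall x, ~ ltL x x.
Hypothesis Ltr : forall x y z, ltL x y -> ltL y z -> ltL x z.
Hypothesis Ltot : forall x y, ltL x y \/ x = y \/ ltL y x.
Hypothesis Ktot : forall a b, ltK a b \/ a = b \/ ltK b a.
Hypothesis Kseg : forall a, card_lt (fun b => ltK b a) (full K).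
Hypothesis lam_incr : forall n, ltL (lam n) (lam (S n)).
Hypothesis lam_cofinal : forall x, exists n, ltL x (lam n).
Hypothesis lam_regular : forall n, regular_elem ltL (lam n).
Hypothesis lam_uncountable : forall n, uncountable_elem ltL (lam n).
Hypothesis f_below : forall a n, ltL (f a n) (lam n).
Hypothesis I_ideal : ideal_on_nat I.
Hypothesis I_finite : forall F, finite_set F -> I F.
Hypothesis f_increasing : forall a b, ltK a b -> lt_mod ltL I (f a) (f b).
Hypothesis f_dominating :
  forall g, (forall n, ltL (g n) (lam n)) -> exists a, lt_mod ltL I g (f a).

Lemma lam_strict_mono m n : m < n -> ltL (lam m) (lam n).
Proof.
  induction n as [|n IH]; intros Hmn; [lia|].
  destruct (Nat.eq_dec m n) as [->|]; auto. apply (Ltr _ _ _ (IH ltac:(lia)) (lam_incr n)).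
Qed.

Lemma lam_injective i j : lam i = lam j -> i = j.
Proof.
  intros E. destruct (Nat.lt_total i j) as [ij|[|ji]]; auto; exfalso.
  - pose proof (lam_strict_mono _ _ ij) as H. rewrite E in H. exact (Lirr _ H).
  - pose proof (lam_strict_mono _ _ ji) as H. rewrite E in H. exact (Lirr _ H).
Qed.

Lemma scale_injective a b : f a = f b -> a = b.
Proof.
  intros E. destruct (Ktot a b) as [ab|[|ba]]; auto; exfalso.
  - pose proof (f_increasing _ _ ab) as H. rewrite <- E in H.
    revert H. apply (not_lt_mod_eventually (N := 0) I_ideal I_finite). intros n _. apply Lirr.
  - pose proof (f_increasing _ _ ba) as H. rewrite E in H.
    revert H. apply (not_lt_mod_eventually (N := 0) I_ideal I_finite). intros n _. apply Lirr.
Qed.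

Lemma tops_equipotent (k0 : K) : equipotent (tops_of f) (full K).
Proof.
  assert (Hidx : forall t, exists a, tops_of f t -> t = inr (f a)).
  { intros t. destruct (classic (tops_of f t)) as [[a Ha]|Nt]; [exists a|exists k0]; tauto. }
  destruct (choice _ Hidx) as [idx Hidx'].
  exists idx. split; [|split].
  - intros t _. exact Logic.I.
  - intros t t' Ht Ht' E. rewrite (Hidx' t Ht), (Hidx' t' Ht'), E. reflexivity.
  - intros a _. exists (inr (f a)). split; [exists a; reflexivity|].
    symmetry. apply scale_injective.
    injection (Hidx' (inr (f a)) (ex_intro _ a eq_refl)). auto.
Qed.

Definition level n (v : L) : Prop := exists a, f a n = v.

Lemma cofinal_levels_unbounded N : exists n, N <= n /\ cofinal_below ltL (lam n) (level n).
Proof.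
  apply NNPP. intros Hno.
  assert (Hbound : forall n, exists y, ltL y (lam n) /\ (N <= n -> forall a, ltL (f a n) y)).
  { intros n. destruct (le_lt_dec N n) as [Nn|nN].
    - assert (Hn : ~ cofinal_below ltL (lam n) (level n)) by (intros Hc; apply Hno; eauto).
      apply not_all_ex_not in Hn as [y Hy]. apply imply_to_and in Hy as [yn Hy].
      exists y. split; auto. intros _ a.
      destruct (Ltot (f a n) y) as [|[<-|ya]]; auto; exfalso; apply Hy; exists (f a n);
        split; try (exists a; reflexivity); auto.
    - destruct (lam_regular n) as [Hinf _]. apply NNPP. intros Hempty. apply Hinf.
      exists []. intros y yn. apply Hempty. exists y. split; [exact yn|lia]. }
  destruct (choice _ Hbound) as [g Hg].
  destruct (f_dominating g (fun n => proj1 (Hg n))) as [a Ha].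
  revert Ha. apply (not_lt_mod_eventually (N := N) I_ideal I_finite).
  intros n Nn gf. exact (Lirr _ (Ltr _ _ _ gf (proj2 (Hg n) Nn a))).
Qed.

Lemma card_le_L_finite_part : card_le (full L) (finite_part f).
Proof.
  assert (Hi : forall n, exists i : L -> L, cofinal_below ltL (lam n) (level n) ->
            (forall x, ltL x (lam n) -> level n (i x)) /\
            (forall x y, ltL x (lam n) -> ltL y (lam n) -> i x = i y -> x = y)).
  { intros n. destruct (classic (cofinal_below ltL (lam n) (level n))) as [Hc|Hc].
    - assert (Hlev : forall v, level n v -> ltL v (lam n)) by (intros v [a <-]; apply f_below).
      destruct (regular_segment_card_le_cofinal (lam_regular n) Hlev Hc) as [i Hi]. exists i. auto.
    - exists (fun x => x). tauto. }
  destruct (choice _ Hi) as [i Hi'].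
  assert (Hn : forall x, exists n, ltL x (lam n) /\ cofinal_below ltL (lam n) (level n)).
  { intros x. destruct (lam_cofinal x) as [m xm].
    destruct (cofinal_levels_unbounded m) as [n [mn Hc]]. exists n. split; auto.
    destruct (Nat.eq_dec m n) as [<-|]; auto. apply (Ltr _ _ _ xm), lam_strict_mono. lia. }
  destruct (choice _ Hn) as [nx Hnx].
  assert (Ha : forall x, exists a, f a (nx x) = i (nx x) x).
  { intros x. destruct (Hnx x) as [xn Hc]. apply (Hi' _ Hc), xn. }
  destruct (choice _ Ha) as [ax Hax].
  exists (fun x => inl (pre (f (ax x)) (S (nx x)))). split.
  - intros x _. split; [|eexists; reflexivity].
    right. exists (ax x). hnf. rewrite pre_length. reflexivity.
  - intros x y _ _ Exy.
    assert (E : pre (f (ax x)) (S (nx x)) = pre (f (ax y)) (S (nx y))) by congruence.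
    assert (Enx : nx x = nx y).
    { apply (f_equal (@length L)) in E. rewrite !pre_length in E. injection E. auto. }
    rewrite Enx in E. apply (pre_agree (n := nx y)) in E; [|lia].
    pose proof (Hax x) as Ax. pose proof (Hax y) as Ay.
    destruct (Hnx x) as [xn _]. destruct (Hnx y) as [yn Hc]. rewrite Enx in Ax, xn.
    apply (proj2 (Hi' _ Hc) x y xn yn). rewrite <- Ax, <- Ay. exact E.
Qed.

Lemma card_le_finite_part_L : card_le (finite_part f) (full L).
Proof.
  destruct (list_injection lam_injective) as [c c_inj].
  exists (fun t => match t with inl s => c s | inr _ => c [] end). split.
  - intros. exact Logic.I.
  - intros t t' [_ [s ->]] [_ [s' ->]] E. f_equal. apply c_inj, E.
Qed.

Lemma countable_nodes_level_countable (C : node L -> Prop) n :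
  card_le C (full nat) ->
  card_le (fun v => exists a k, C (inl (pre (f a) k)) /\ n < k /\ f a n = v) (full nat).
Proof.
  intros [phi [_ phi_inj]].
  assert (Hw : forall v, exists t, (exists a k, C (inl (pre (f a) k)) /\ n < k /\ f a n = v) ->
            exists a k, t = inl (pre (f a) k) /\ C t /\ n < k /\ f a n = v).
  { intros v. destruct (classic (exists a k, C (inl (pre (f a) k)) /\ n < k /\ f a n = v))
      as [[a [k Hak]]|NS].
    - exists (inl (pre (f a) k)). intros _. exists a, k. tauto.
    - exists (inl []). contradiction. }
  destruct (choice _ Hw) as [w Hw'].
  exists (fun v => phi (w v)). split; [intros; exact Logic.I|].
  intros v v' Sv Sv' E.
  destruct (Hw' v Sv) as [a [k [Ew [Cw [nk <-]]]]].
  destruct (Hw' v' Sv') as [a' [k' [Ew' [Cw' [nk' <-]]]]].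
  apply phi_inj in E; auto. rewrite Ew, Ew' in E. injection E as E.
  assert (k = k') as <-.
  { apply (f_equal (@length L)) in E. rewrite !pre_length in E. exact E. }
  exact (pre_agree E nk).
Qed.

Lemma countable_nodes_levels_bounded (C : node L -> Prop) :
  card_le C (full nat) -> exists g : nat -> L, (forall n, ltL (g n) (lam n)) /\
    forall a k n, C (inl (pre (f a) k)) -> n < k -> ltL (f a n) (g n).
Proof.
  intros Ccount.
  assert (Hb : forall n, exists y, ltL y (lam n) /\
             forall a k, C (inl (pre (f a) k)) -> n < k -> ltL (f a n) y).
  { intros n.
    destruct (regular_uncountable_bounded Ltot (lam_regular n) (lam_uncountable n)
                (S := fun v => exists a k, C (inl (pre (f a) k)) /\ n < k /\ f a n = v))
      as [y [yn Hy]].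
    - intros v [a [k [_ [_ <-]]]]. apply f_below.
    - apply countable_nodes_level_countable, Ccount.
    - exists y. split; auto. intros a k Ca nk. apply Hy. exists a, k. auto. }
  destruct (choice _ Hb) as [g Hg]. exists g. split.
  - intros n. apply Hg.
  - intros a k n. apply Hg.
Qed.

Lemma no_aleph0_kappa_subgraph (G : node L -> node L -> Prop) :
  (forall u v, G u v -> tlt u v \/ tlt v u) ->
  ~ has_aleph0_kappa_subgraph (full K) (finite_part f) (tops_of f)
      (fun a b => finite_part f a /\ tops_of f b /\ G a b).
Proof.
  intros Gcomp [C [D [E [_ [DB [EG [_ [Ceq [Deq Dinf]]]]]]]]].
  assert (Ccount : card_le C (full nat)).
  { destruct Ceq as [phi [Hphi [phi_inj _]]]. exists phi. auto. }
  destruct (countable_nodes_levels_bounded C Ccount) as [g [g_below g_bound]].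
  destruct (f_dominating g g_below) as [a Ha].
  assert (KD : card_le (full K) (fun b => D (inr (f b)))).
  { destruct (equipotent_card_ge (inl []) Deq) as [psi [psiD psi_inj]].
    assert (Hidx : forall k, exists b, psi k = inr (f b)).
    { intros k. destruct (DB _ (psiD k Logic.I)) as [b Hb]. eauto. }
    destruct (choice _ Hidx) as [idx Hidx']. exists idx. split.
    - intros k _. rewrite <- Hidx'. apply psiD. exact Logic.I.
    - intros k k' _ _ Ek. apply psi_inj; try exact Logic.I. rewrite !Hidx', Ek. reflexivity. }
  destruct (large_set_unbounded Ktot Kseg KD a) as [b [Db ab]].
  assert (Hgb : lt_mod ltL I g (f b)).
  { destruct ab as [<-|ab]; [exact Ha|].
    exact (lt_mod_trans I_ideal Ltr Ha (f_increasing _ _ ab)). }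
  revert Hgb. apply (not_lt_mod_eventually (N := 0) I_ideal I_finite). intros n _ gb.
  apply (Dinf _ Db). exists (map (fun k => inl (pre (f b) k)) (seq 0 (S n))).
  intros t [Ct Etb]. destruct (EG _ _ Etb) as [[_ [s ->]] [_ Gsb]].
  assert (Es : s = pre (f b) (length s)) by (destruct (Gcomp _ _ Gsb) as [H|[]]; exact H).
  apply in_map_iff. exists (length s). split; [rewrite <- Es; reflexivity|].
  apply in_seq. destruct (le_lt_dec (length s) n) as [|ns]; [lia|exfalso].
  rewrite Es in Ct. exact (Lirr _ (Ltr _ _ _ gb (g_bound _ _ _ Ct ns))).
Qed.

End Scale.

Theorem proposition7p4
  (L K : Type) (ltL : L -> L -> Prop) (ltK : K -> K -> Prop)
  (HL : is_cardinal_type ltL) (Hsing : singular_type ltL)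
  (Hcof : countable_cofinality ltL)
  (HK : is_cardinal_type ltK) (Hreg : regular_type ltK)
  (HLK : card_lt (full L) (full K))
  (f : K -> nat -> L) (Hscale : kappa_scale ltL ltK f)
  (G : node L -> node L -> Prop) (HG : T_graph (downclosure f) G) :
  card_graph (full L) (full K) (finite_part f) (tops_of f)
    (fun a b => finite_part f a /\ tops_of f b /\ G a b)
  /\ ~ has_aleph0_kappa_subgraph (full K) (finite_part f) (tops_of f)
         (fun a b => finite_part f a /\ tops_of f b /\ G a b).
Proof.
  destruct Hscale as [lam [I [lam_incr [lam_cofinal [lam_props
    [f_below [I_ideal [I_finite [f_increasing f_dominating]]]]]]]]].
  destruct HL as [[Lirr [Ltr [Ltot _]]] _].
  destruct HK as [[_ [_ [Ktot _]]] Kseg].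
  assert (lam_regular : forall n, regular_elem ltL (lam n)) by apply lam_props.
  assert (lam_uncountable : forall n, uncountable_elem ltL (lam n)) by apply lam_props.
  assert (K_inhabited : exists k : K, True).
  { apply NNPP. intros Kempty. apply (proj1 Hreg). exists []. intros k. exfalso. eauto. }
  destruct K_inhabited as [k0 _].
  split; [split; [|split; [|split]]|].
  - tauto.
  - apply card_le_antisym.
    + eapply card_le_finite_part_L; eauto.
    + eapply card_le_L_finite_part; eauto.
  - eapply tops_equipotent; eauto.
  - intros b [a ->] Hfin. apply (T_graph_lower_neighbours_infinite HG (a := a)).
    eapply finite_set_subset; [|exact Hfin].
    intros t [Ft Gt]. split; [|split; [|split]]; eauto. exists a. reflexivity.
  - eapply no_aleph0_kappa_subgraph; eauto. apply HG.
Qed.
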